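(* Assume (H1), (H2.1)–(H2.4), (H3.1), (H3.2) and (H3.3). Then $\|\widehat{T}_{N}-T|_{\widehat{X}}\|_{\widehat{X}\leftarrow\widehat{X}}\to 0$ as $N\to\infty$.
   Context: Let $d\ge 1$ be an integer and $\tau>0$, $h\ge\tau$ real. $X$, $X^{+}$, $X^{\pm}$ are real normed spaces of functions $[-\tau,0]\to\mathbb{R}^{d}$, $[0,h]\to\mathbb{R}^{d}$, $[-\tau,h]\to\mathbb{R}^{d}$, respectively. For a function $u$ on $[-\tau,h]$, $u_{h}(\theta):=u(h+\theta)$, $\theta\in[-\tau,0]$. $V\colon X\times X^{+}\to X^{\pm}$ and $\mathcal{F}_{s}\colon X^{\pm}\to X^{+}$ are linear with $V(\phi,z)|_{[-\tau,0]}=\phi$; $V^{-}\phi:=V(\phi,0_{X^{+}})$, $V^{+}z:=V(0_{X},z)$. The operator $T\colon X\to X$ is $T\phi:=V(\phi,z^{\ast})_{h}$, where $z^{\ast}\in X^{+}$ is the unique solution of $z=\mathcal{F}_{s}V(\phi,z)$. Let $\widetilde{X}^{+}\subseteq X^{+}$ be a linear subspace; for $N\in\mathbb{N}$, $X_{N}^{+}$ is finite-dimensional, $R_{N}^{+}\colon\widetilde{X}^{+}\to X_{N}^{+}$, $P_{N}^{+}\colon X_{N}^{+}\to X^{+}$ are linear with $R_{N}^{+}P_{N}^{+}=I_{X_{N}^{+}}$, $\mathcal{L}_{N}^{+}:=P_{N}^{+}R_{N}^{+}$, and $\Pi_{N}^{+}$ is the range of $P_{N}^{+}$. Hypotheses: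 (H1) $I_{X^{+}}-\mathcal{F}_{s}V^{+}$ is invertible on $X^{+}$ with bounded inverse and for each $\phi\in X$ the equation $z=\mathcal{F}_{s}V(\phi,z)$ has a unique solution in $X^{+}$. There is a linear subspace $\widehat{X}^{+}\subseteq\widetilde{X}^{+}$ with a norm $\|\cdot\|_{\widehat{X}^{+}}$ making it complete such that: (H2.1) $\|(\mathcal{L}_{N}^{+}-I_{X^{+}})|_{\widehat{X}^{+}}\|_{X^{+}\leftarrow\widehat{X}^{+}}\to 0$ as $N\to\infty$; (H2.2) $\Pi_{N}^{+}\subseteq\widehat{X}^{+}$ for all $N$; (H2.3) there is $\hat{c}_{1}>0$ with $\|\cdot\|_{X^{+}}\le\hat{c}_{1}\|\cdot\|_{\widehat{X}^{+}}$ on $\widehat{X}^{+}$; (H2.4) the range of $\mathcal{F}_{s}V^{+}$ is contained in $\widehat{X}^{+}$ and $\mathcal{F}_{s}V^{+}\colon X^{+}\to\widehat{X}^{+}$ is bounded. There is a linear subspace $\widehat{X}\subseteq X$ with a norm $\|\cdot\|_{\widehat{X}}$ making it complete such that: (H3.1) $\mathcal{F}_{s}V^{-}$ maps $\widehat{X}$ into $\widehat{X}^{+}$ and $\mathcal{F}_{s}V^{-}|_{\widehat{X}}\colon\widehat{X}\to\widehat{X}^{+}$ is bounded; (H3.2) $V(\phi,z)_{h}\in\widehat{X}$ for all $(\phi,z)\in\widehat{X}\times\widehat{X}^{+}$; (H3.3) there is $\hat{c}_{2}>0$ with $\|(V^{+}z)_{h}\|_{\widehat{X}}\le\hat{c}_{2}\|z\|_{X^{+}}$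 for all $z\in\widehat{X}^{+}$. For $N$ large enough that $I_{X^{+}}-\mathcal{L}_{N}^{+}\mathcal{F}_{s}V^{+}$ is invertible on $X^{+}$, the operator $\widehat{T}_{N}\colon\widehat{X}\to\widehat{X}$ is $\widehat{T}_{N}\phi:=V(\phi,w^{\ast})_{h}$, where $w^{\ast}\in X^{+}$ is the unique solution of $z=\mathcal{L}_{N}^{+}\mathcal{F}_{s}V(\phi,z)$. *)

From HB Require Import structures.
From mathcomp Require Import all_boot all_order all_algebra.
From mathcomp Require Import all_classical all_reals all_analysis.
Set Implicit Arguments. Unset Strict Implicit. Unset Printing Implicit Defensive.
Import Order.TTheory GRing.Theory Num.Theory.
Import numFieldNormedType.Exports.
Local Open Scope classical_set_scope.
Local Open Scope ring_scope.

Section Defs.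
Variable R : realType.

Definition bounded_op (U V : normedModType R) (f : U -> V) :=
  exists C : R, forall x, `|f x| <= C * `|x|.

Definition bounded_invertible (U : normedModType R) (A : U -> U) :=
  exists B : U -> U, [/\ cancel A B, cancel B A & bounded_op B].

Definition opnorm (U V : normedModType R) (f : U -> V) : \bar R :=
  ereal_sup [set (`|f x|)%:E | x in [set x : U | `|x| <= 1]].

(* Operator norm ||D||_{V <- U} of an operator D : U -> W whose values lie in
   the subspace V of W, V being embedded in W by the injective map i
   (the V-norm of D u is the norm of its unique i-preimage). *)
Definition opnorm_via (U V W : normedModType R) (i : V -> W) (D : U -> W)
  : \bar R :=
  ereal_sup [set (`|v|)%:E | v in
              [set v : V | exists2 u : U, `|u| <= 1 & i v = D u]].

(* f realizes U as a normed space of functions [a,b] -> R^d: each element x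
   is the function t |-> f x t (t in [a,b]); the vector operations are the
   pointwise ones and an element is determined by its values on [a,b]. *)
Definition function_space (d : nat) (a b : R) (U : normedModType R)
  (f : U -> R -> 'rV[R]_d) :=
  (forall (c : R) (x y : U) (t : R), a <= t <= b ->
      f (c *: x + y) t = c *: f x t + f y t) /\
  (forall x y : U, (forall t, a <= t <= b -> f x t = f y t) -> x = y).

(* psi = u_h on [-tau, 0], i.e. psi(theta) = u(h + theta). *)
Definition shift_rep (d : nat) (tau h : R) (psi u : R -> 'rV[R]_d) :=
  forall theta : R, - tau <= theta <= 0 -> psi theta = u (h + theta).

End Defs.

(* Write A := I - F_s V^+ on X^+ and S_N := (L_N^+ - I) on \hat X^+, so that
   I - L_N^+ F_s V^+ = A - S_N F_s V^+ and ||S_N|| -> 0 by (H2.1).  As soon as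
   ||A^-1|| ||F_s V^+|| ||S_N|| <= 1/2, an a priori bound together with the
   Banach fixed-point theorem in \hat X^+ makes I - L_N^+ F_s V^+ boundedly
   invertible, so \hat T_N is defined.  For phi in \hat X the exact fixed point
   z and the discrete one w satisfy A (w - z) = S_N (F_s V^- phi + F_s V^+ w),
   whence ||w - z|| = O(||S_N||) ||phi||; as \hat T_N phi - T phi is
   (V^+ (w - z))_h, (H3.3) turns this into an O(||S_N||) operator-norm bound. *)

From mathcomp Require Import lra.
From HB Require Import structures.
From mathcomp Require Import all_boot all_order all_algebra.
From mathcomp Require Import all_classical all_reals all_analysis.
Set Implicit Arguments. Unset Strict Implicit. Unset Printing Implicit Defensive.
Import Order.TTheory GRing.Theory Num.Theory.
Import numFieldNormedType.Exports.
Local Open Scope classical_set_scope.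
Local Open Scope ring_scope.

Lemma subr_interchange (V : zmodType) (x y a b : V) :
  x - y - (a - b) = x - a - (y - b).
Proof.
by rewrite !opprB !addrA (addrAC x (- y)) (addrAC _ (- y)) (addrAC x b).
Qed.

Section LinearMaps.
Variables (R : pzRingType) (U U' W W' : lmodType R).

Lemma linear_pair_split (f : {linear (U * U')%type -> W}) x y :
  f (x, y) = f (x, 0) + f (0, y).
Proof.
by rewrite -linearD; congr (f _); rewrite -[RHS]/(x + 0, 0 + y) addr0 add0r.
Qed.

Lemma linear_pair_subl (f : {linear (U * U')%type -> W}) x y y' :
  f (x, y) - f (x, y') = f (0, y - y').
Proof.
by rewrite -linearB; congr (f _); rewrite -[LHS]/(x - x, y - y') subrr.
Qed.

Lemma linear_pair_r (f : {linear (U * U')%type -> W}) :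
  linear (fun y : U' => f (0, y)).
Proof.
move=> a y y'; rewrite -linearP; congr (f _).
by rewrite -[RHS]/(a *: 0 + 0, a *: y + y') scaler0 addr0.
Qed.

Lemma linear_lift (i : {linear W -> W'}) (G : U -> W) (f : U -> W') :
  injective i -> linear f -> (forall u, i (G u) = f u) -> linear G.
Proof.
by move=> i_inj f_lin iG a u v; apply: i_inj; rewrite linearP !iG f_lin.
Qed.

Lemma linear_defect_on (D : set W) (L : W -> W) (i : {linear U -> W}) :
  (forall a x y, D x -> D y -> L (a *: x + y) = a *: L x + L y) ->
  (forall u, D (i u)) -> linear (fun u => L (i u) - i u).
Proof.
by move=> L_lin Di a u v; rewrite linearP L_lin // scalerBr opprD addrACA.
Qed.

End LinearMaps.

Section OperatorNorms.
Variable R : realType.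

Lemma bounded_op_ge0 (U V : normedModType R) (f : U -> V) :
  bounded_op f -> exists2 C : R, 0 <= C & forall x, `|f x| <= C * `|x|.
Proof.
case=> C fC; exists `|C| => // x.
by rewrite (le_trans (fC x)) // ler_wpM2r // ler_norm.
Qed.

Lemma bounded_invertible_coercive (U : normedModType R) (A : U -> U) (C : R) :
  {morph A : x y / x - y} -> (forall z, `|z| <= C * `|A z|) ->
  (forall y, exists z, A z = y) -> bounded_invertible A.
Proof.
move=> AB A_coer A_surj; have [B AK] := choice A_surj.
have A_inj : injective A.
  move=> x y /eqP; rewrite -subr_eq0 -AB => /eqP Axy.
  apply/eqP; rewrite -subr_eq0 -normr_le0 (le_trans (A_coer _)) //.
  by rewrite Axy normr0 mulr0.
exists B; split => //; first exact: inj_can_sym AK A_inj.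
by exists C => y; rewrite -{2}(AK y).
Qed.

Lemma opnorm_ge0 (U V : normedModType R) (f : U -> V) :
  f 0 = 0 -> (0 <= opnorm f)%E.
Proof.
move=> f0; apply: ereal_sup_ubound; exists 0; last by rewrite f0 normr0.
by rewrite /= normr0.
Qed.

Lemma ler_opnorm (U V : normedModType R) (f : U -> V) :
  scalable f -> opnorm f \is a fin_num ->
  forall x, `|f x| <= fine (opnorm f) * `|x|.
Proof.
move=> fZ f_fin x; have [->|x0] := eqVneq x 0.
  by rewrite -(scale0r 0) fZ !scale0r !normr0 mulr0.
have x_gt0 : 0 < `|x| by rewrite normr_gt0.
have xE : x = `|x| *: (`|x|^-1 *: x) by rewrite scalerA mulfV ?scale1r ?gt_eqF.
rewrite {1}xE fZ normrZ normr_id mulrC ler_pM2r // -lee_fin (fineK f_fin).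
apply: ereal_sup_ubound; exists (`|x|^-1 *: x) => //=.
by rewrite normrZ normrV ?unitfE ?gt_eqF // normr_id mulVf ?gt_eqF.
Qed.

Lemma opnorm_via_le (U V W : normedModType R) (i : V -> W) (D : U -> W) (k : R) :
  injective i -> 0 <= k ->
  (forall u, exists2 v, i v = D u & `|v| <= k * `|u|) ->
  (0 <= opnorm_via i D <= k%:E)%E.
Proof.
move=> i_inj k_ge0 D_le; apply/andP; split.
  have [v Dv _] := D_le 0; apply: (@le_trans _ _ (`|v|)%:E).
    by rewrite lee_fin.
  by apply: ereal_sup_ubound; exists v => //; exists 0; rewrite ?normr0.
apply: ge_ereal_sup => _ [v [u u_le1 Du] <-].
have [v' Dv' v'_le] := D_le u; rewrite (i_inj _ _ (etrans Du (esym Dv'))).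
by rewrite lee_fin (le_trans v'_le) // ler_piMr.
Qed.

Lemma opnorm_via_cvg0 (U V W : normedModType R) (i : V -> W)
    (D : nat -> U -> W) (k : nat -> R) :
  injective i -> (forall N, 0 <= k N) -> k N @[N --> \oo] --> 0 ->
  (\forall N \near \oo, forall u, exists2 v, i v = D N u & `|v| <= k N * `|u|) ->
  (fun N => opnorm_via i (D N)) @ \oo --> 0%:E.
Proof.
move=> i_inj k_ge0 k_cvg D_le.
apply: (@squeeze_cvge _ _ _ _ (cst 0%E) _ (fun N => (k N)%:E)); last 2 first.
- exact: cvg_cst.
- by apply: cvg_EFin k_cvg; exact: nearW.
by apply: filterS D_le => N; exact: opnorm_via_le.
Qed.

End OperatorNorms.

Lemma contraction_fixpoint (R : realType) (W : completeNormedModType R)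
    (K : W -> W) (q : R) :
  0 <= q -> q < 1 -> (forall x y, `|K x - K y| <= q * `|x - y|) ->
  exists p, p = K p.
Proof.
move=> q_ge0 q_lt1 K_lip.
pose f : {fun [set: W] >-> [set: W]} := [fun of totalfun_ setT K].
have f_contr : is_contraction f.
  by exists (NngNum q_ge0); split => // -[x y] _; exact: K_lip.
have [||p _ pE] := banach_fixed_point f_contr.
- exact: closedT.
- by exists 0.
- by exists p.
Qed.

(* [i] embeds \hat X^+ in X^+, [G] is F_s V^+ and [S] is (L_N^+ - I) i, so that
   [z - (i (G z) + S (G z))] is (I - L_N^+ F_s V^+) z. *)
Section PerturbedFixpoint.
Variables (R : realType) (Z : normedModType R) (W : completeNormedModType R).
Variables (i : {linear W -> Z}) (G : {linear Z -> W}) (S : {linear W -> Z}).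
Variables (Ainv : Z -> Z) (b g e : R).
Hypothesis AinvK : cancel (fun z => z - i (G z)) Ainv.
Hypothesis AKinv : cancel Ainv (fun z => z - i (G z)).
Hypothesis Ainv_le : forall y, `|Ainv y| <= b * `|y|.
Hypothesis G_le : forall z, `|G z| <= g * `|z|.
Hypothesis S_le : forall w, `|S w| <= e * `|w|.
Hypotheses (b_ge0 : 0 <= b) (g_ge0 : 0 <= g) (e_ge0 : 0 <= e).
Hypothesis bge_le : b * g * e <= 1 / 2.

Let Ainv_sub : {morph Ainv : x y / x - y}.
Proof.
move=> x y; apply: (can_inj AinvK).
rewrite AKinv -{1}(AKinv x) -{1}(AKinv y) (linearB G) (linearB i).
by rewrite !opprD !opprK addrACA.
Qed.

Let SG_le z : `|S (G z)| <= g * e * `|z|.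
Proof. by rewrite (le_trans (S_le _)) // (mulrC g) -mulrA ler_wpM2l. Qed.

Let bge_ge0 : 0 <= b * g * e.
Proof. by rewrite !mulr_ge0. Qed.

Lemma perturbed_apriori z : `|z| <= 2 * b * `|z - (i (G z) + S (G z))|.
Proof.
have zE : z = Ainv (z - (i (G z) + S (G z)) + S (G z)).
  by rewrite opprD addrA subrK AinvK.
set y := z - _ in zE *.
have z_le : `|z| <= b * `|y| + b * g * e * `|z|.
  rewrite {1}zE (le_trans (Ainv_le _)) // -!mulrA -mulrDr ler_wpM2l //.
  by rewrite (le_trans (ler_normD _ _)) // lerD2l mulrA SG_le.
have : b * g * e * `|z| <= 1 / 2 * `|z| by rewrite ler_wpM2r.
by have := normr_ge0 y; lra.
Qed.

Lemma perturbed_surjective y : exists z, z - (i (G z) + S (G z)) = y.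
Proof.
(* If p = K p, then z := Ainv (y + S p) has G z = p and solves the equation. *)
pose K w := G (Ainv (y + S w)).
have K_lip w w' : `|K w - K w'| <= 1 / 2 * `|w - w'|.
  rewrite /K -linearB -Ainv_sub opprD addrACA subrr add0r -linearB.
  rewrite (le_trans (G_le _)) // (le_trans _ (ler_wpM2r (normr_ge0 _) bge_le)) //.
  rewrite -!mulrA mulrCA ler_wpM2l // (le_trans (Ainv_le _)) //.
  by rewrite ler_wpM2l // S_le.
have [p pE] : exists p, p = K p by apply: (contraction_fixpoint _ _ K_lip); lra.
by exists (Ainv (y + S p)); rewrite opprD addrA AKinv -/(K p) -pE addrK.
Qed.

Lemma perturbed_bounded_invertible :
  bounded_invertible (fun z => z - (i (G z) + S (G z))).
Proof.
apply: (bounded_invertible_coercive _ perturbed_apriori perturbed_surjective).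
move=> x y /=; rewrite (linearB G) (linearB i) (linearB S) addrACA -opprD.
exact: subr_interchange.
Qed.

Lemma perturbed_fixpoint p : exists w, w = i (p + G w) + S (p + G w).
Proof.
have [w wE] := perturbed_surjective (i p + S p).
by exists w; rewrite !linearD addrACA -wE subrK.
Qed.

Lemma perturbed_fixpoint_error (c1 : R) p zs w :
  (forall x, `|i x| <= c1 * `|x|) ->
  zs = i (p + G zs) -> w = i (p + G w) + S (p + G w) ->
  `|w - zs| <= 2 * b * e * (1 + g * b * c1) * `|p|.
Proof.
move=> i_le zsE wE.
have zsA : zs - i (G zs) = i p by rewrite {1}zsE linearD addrK.
have wA : w - i (G w) = S (p + G w) + i p.
  by rewrite {1}wE linearD addrAC addrK addrC.
have zs_le : `|zs| <= b * c1 * `|p|.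
  by rewrite -(AinvK zs) zsA (le_trans (Ainv_le _)) // -mulrA ler_wpM2l.
have d_le : `|w - zs| <= b * e * `|p| + b * g * e * `|w|.
  have dA : (w - zs) - i (G (w - zs)) = S (p + G w).
    by rewrite (linearB G) (linearB i) subr_interchange wA zsA addrK.
  rewrite -(AinvK (w - zs)) dA (le_trans (Ainv_le _)) // -!mulrA -mulrDr.
  rewrite ler_wpM2l // (le_trans (S_le _)) // mulrCA -mulrDr ler_wpM2l //.
  by rewrite (le_trans (ler_normD _ _)) // lerD2l.
have w_le : `|w| <= `|w - zs| + `|zs| by rewrite -{1}(subrK zs w) ler_normD.
have : b * g * e * `|w| <= b * g * e * `|w - zs| + b * g * e * (b * c1 * `|p|).
  by rewrite -mulrDr ler_wpM2l // (le_trans w_le) // lerD2l.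
have : b * g * e * `|w - zs| <= 1 / 2 * `|w - zs| by rewrite ler_wpM2r.
lra.
Qed.

End PerturbedFixpoint.

Section FunctionSpaces.
Variables (R : realType) (d : nat).

Lemma function_spaceB (a b : R) (U : normedModType R) (f : U -> R -> 'rV[R]_d) :
  function_space a b f ->
  forall x y t, a <= t <= b -> f (x - y) t = f x t - f y t.
Proof.
by case=> f_lin _ x y t t_ab; rewrite -scaleN1r addrC f_lin // scaleN1r addrC.
Qed.

Lemma shift_repB (tau h : R) (X Y : normedModType R)
    (fX : X -> R -> 'rV[R]_d) (fY : Y -> R -> 'rV[R]_d) x x' y y' :
  0 <= h -> function_space (- tau) 0 fX -> function_space (- tau) h fY ->
  shift_rep tau h (fX x) (fY y) -> shift_rep tau h (fX x') (fY y') ->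
  shift_rep tau h (fX (x - x')) (fY (y - y')).
Proof.
move=> h_ge0 fsX fsY xy xy' t /[dup] t_in /andP[t_ge t_le0].
rewrite !(function_spaceB fsX) // xy // xy' // (function_spaceB fsY) //.
by apply/andP; split; lra.
Qed.

End FunctionSpaces.

(* [G], [Gm] are F_s V^+ and F_s V^- read in \hat X^+, [L] is L_N^+ and
   [Th] is \hat T_N. *)
Section DiscretizationError.
Variables (R : realType) (d : nat) (tau h : R) (X Xp Xpm : normedModType R).
Variables (fX : X -> R -> 'rV[R]_d) (fXpm : Xpm -> R -> 'rV[R]_d).
Variables (V : {linear (X * Xp)%type -> Xpm}) (Fs : {linear Xpm -> Xp}).
Variables (T : X -> X) (Xph Xh : normedModType R).
Variables (iXp : {linear Xph -> Xp}) (iX : {linear Xh -> X}).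
Variables (G : Xp -> Xph) (Gm : Xh -> Xph) (m c2 : R).
Hypotheses (h_ge0 : 0 <= h) (fsX : function_space (- tau) 0 fX)
  (fsXpm : function_space (- tau) h fXpm).
Hypothesis T_rep : forall phi z, z = Fs (V (phi, z)) ->
  shift_rep tau h (fX (T phi)) (fXpm (V (phi, z))).
Hypothesis z_ex : forall phi, exists z, z = Fs (V (phi, z)).
Hypothesis G_rep : forall z, iXp (G z) = Fs (V (0, z)).
Hypothesis Gm_rep : forall phi, iXp (Gm phi) = Fs (V (iX phi, 0)).
Hypothesis Gm_le : forall phi, `|Gm phi| <= m * `|phi|.
Hypothesis psi_ex : forall phi z, exists psi,
  shift_rep tau h (fX (iX psi)) (fXpm (V (iX phi, iXp z))).
Hypothesis psi_le : forall z psi,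
  shift_rep tau h (fX (iX psi)) (fXpm (V (0, iXp z))) -> `|psi| <= c2 * `|iXp z|.
Hypothesis c2_ge0 : 0 <= c2.

Variables (L : Xp -> Xp) (S : Xph -> Xp) (Th : Xh -> Xh) (delta : R).
Hypothesis L_iXp : forall w, L (iXp w) = iXp w + S w.
Hypothesis L_range : forall x, exists w, iXp w = L x.
Hypothesis Th_rep : forall phi w, w = L (Fs (V (iX phi, w))) ->
  shift_rep tau h (fX (iX (Th phi))) (fXpm (V (iX phi, w))).
Hypothesis w_ex : forall p, exists w, w = iXp (p + G w) + S (p + G w).
Hypothesis w_err : forall p zs w, zs = iXp (p + G zs) ->
  w = iXp (p + G w) + S (p + G w) -> `|w - zs| <= delta * `|p|.
Hypothesis delta_ge0 : 0 <= delta.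

Let fixpoint_split phi z : Fs (V (iX phi, z)) = iXp (Gm phi + G z).
Proof. by rewrite linearD Gm_rep G_rep -linearD -linear_pair_split. Qed.

Lemma discretization_error u :
  exists2 v, iX v = iX (Th u) - T (iX u) & `|v| <= c2 * delta * m * `|u|.
Proof.
have [zs zs_fix] := z_ex (iX u); have zsE := etrans zs_fix (fixpoint_split u zs).
have [psi psi_rep] := psi_ex u (Gm u + G zs); rewrite -zsE in psi_rep.
have T_psi : iX psi = T (iX u).
  by apply: fsX.2 => t t_in; rewrite psi_rep // (T_rep zs_fix).
have [w wE] := w_ex (Gm u).
have w_fix : w = L (Fs (V (iX u, w))) by rewrite fixpoint_split L_iXp.
have [om omE] := L_range (Fs (V (iX u, w))); rewrite -w_fix in omE.
exists (Th u - psi); first by rewrite linearB T_psi.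
have diff_rep : shift_rep tau h (fX (iX (Th u - psi)))
                  (fXpm (V (0, iXp (om - (Gm u + G zs))))).
  rewrite linearB (linearB iXp) omE -zsE -(linear_pair_subl V (iX u)).
  exact: shift_repB (Th_rep w_fix) psi_rep.
rewrite (le_trans (psi_le diff_rep)) // (linearB iXp) omE -zsE -!mulrA.
by rewrite ler_wpM2l // (le_trans (w_err zsE wE)) // ler_wpM2l.
Qed.

End DiscretizationError.

Theorem proposition4p7 (R : realType) (d : nat) (tau h : R)
  (X Xp Xpm : normedModType R)
  (fX : X -> R -> 'rV[R]_d) (fXp : Xp -> R -> 'rV[R]_d)
  (fXpm : Xpm -> R -> 'rV[R]_d)
  (V : {linear (X * Xp)%type -> Xpm}) (Fs : {linear Xpm -> Xp})
  (T : X -> X)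
  (Xt : set Xp) (XN : nat -> vectType R)
  (RN : forall N : nat, Xp -> XN N) (PN : forall N : nat, {linear XN N -> Xp})
  (Xph : completeNormedModType R) (iXp : {linear Xph -> Xp})
  (Xh : completeNormedModType R) (iX : {linear Xh -> X})
  (c1 c2 : R) (G : Xp -> Xph) (Gm : Xh -> Xph)
  (That : nat -> Xh -> Xh) :
  (* setting *)
  (0 < d)%N -> 0 < tau -> tau <= h ->
  function_space (- tau) 0 fX ->
  function_space 0 h fXp ->
  function_space (- tau) h fXpm ->
  (forall (phi : X) (z : Xp) (t : R), - tau <= t <= 0 ->
      fXpm (V (phi, z)) t = fX phi t) ->
  (* the subspace X~+ and the restriction/prolongation operators *)
  Xt 0 ->
  (forall (a : R) (x y : Xp), Xt x -> Xt y -> Xt (a *: x + y)) ->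
  (forall (N : nat) (a : R) (x y : Xp), Xt x -> Xt y ->
      RN N (a *: x + y) = a *: RN N x + RN N y) ->
  (forall (N : nat) (x : XN N), Xt (PN N x)) ->
  (forall (N : nat) (x : XN N), RN N (PN N x) = x) ->
  (* T phi := V(phi, zstar)_h, zstar the solution of z = Fs V(phi, z) *)
  (forall (phi : X) (z : Xp), z = Fs (V (phi, z)) ->
      shift_rep tau h (fX (T phi)) (fXpm (V (phi, z)))) ->
  (* (H1) *)
  bounded_invertible (fun z : Xp => z - Fs (V (0, z))) ->
  (forall phi : X, exists! z : Xp, z = Fs (V (phi, z))) ->
  (* X^+ hat: a complete normed space linearly embedded in X~+ *)
  injective iXp ->
  (forall w : Xph, Xt (iXp w)) ->
  (* (H2.1) *)
  (fun N : nat => opnorm (fun w : Xph => PN N (RN N (iXp w)) - iXp w))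
     @ \oo --> 0%:E ->
  (* (H2.2) *)
  (forall (N : nat) (x : XN N), exists w : Xph, iXp w = PN N x) ->
  (* (H2.3) *)
  0 < c1 -> (forall w : Xph, `|iXp w| <= c1 * `|w|) ->
  (* (H2.4) : G is Fs V^+ viewed as a map X^+ -> X^+ hat *)
  (forall z : Xp, iXp (G z) = Fs (V (0, z))) -> bounded_op G ->
  (* X hat: a complete normed space linearly embedded in X *)
  injective iX ->
  (* (H3.1) : Gm is Fs V^- restricted to X hat, viewed as a map into X^+ hat *)
  (forall phi : Xh, iXp (Gm phi) = Fs (V (iX phi, 0))) -> bounded_op Gm ->
  (* (H3.2) *)
  (forall (phi : Xh) (z : Xph), exists psi : Xh,
      shift_rep tau h (fX (iX psi)) (fXpm (V (iX phi, iXp z)))) ->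
  (* (H3.3) *)
  0 < c2 ->
  (forall (z : Xph) (psi : Xh),
      shift_rep tau h (fX (iX psi)) (fXpm (V (0, iXp z))) ->
      `|psi| <= c2 * `|iXp z|) ->
  (* T^_N phi := V(phi, wstar)_h, wstar the solution of z = L_N Fs V(phi, z),
     for every N such that I - L_N Fs V^+ is invertible *)
  (forall N : nat,
      bounded_invertible (fun z : Xp => z - PN N (RN N (Fs (V (0, z))))) ->
      forall (phi : Xh) (w : Xp), w = PN N (RN N (Fs (V (iX phi, w)))) ->
      shift_rep tau h (fX (iX (That N phi))) (fXpm (V (iX phi, w)))) ->
  (* conclusion: || T^_N - T|_{X hat} ||_{X hat <- X hat} -> 0 *)
  (fun N : nat => opnorm_via iX (fun phi : Xh => iX (That N phi) - T (iX phi)))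
     @ \oo --> 0%:E.
Proof.
move=> _ tau_gt0 tau_le_h fsX _ fsXpm _ _ _ RN_lin _ _ T_rep
  [Ainv [AinvK AKinv Ainv_bd]] z_uniq iXp_inj Xt_iXp S_cvg PN_range
  /ltW c1_ge0 iXp_le G_rep G_bd iX_inj Gm_rep Gm_bd psi_ex /ltW c2_ge0 psi_le
  That_rep.
have h_ge0 : 0 <= h by lra.
have z_ex phi : exists z, z = Fs (V (phi, z)).
  by have [z []] := z_uniq phi; exists z.
have [b b_ge0 Ainv_le] := bounded_op_ge0 Ainv_bd.
have [g g_ge0 G_le] := bounded_op_ge0 G_bd.
have [m m_ge0 Gm_le] := bounded_op_ge0 Gm_bd.
pose GL : {linear Xp -> Xph} := HB.pack G (GRing.isLinear.Build _ _ _ _ G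
  (linear_lift iXp_inj (linear_pair_r (Fs \o V)) G_rep)).
have L_lin N a x y : Xt x -> Xt y ->
    PN N (RN N (a *: x + y)) = a *: PN N (RN N x) + PN N (RN N y).
  by move=> Xx Xy; rewrite RN_lin // linearP.
pose S N : {linear Xph -> Xp} := HB.pack (fun w => PN N (RN N (iXp w)) - iXp w)
  (GRing.isLinear.Build _ _ _ _ _ (linear_defect_on (L_lin N) Xt_iXp)).
have A_eq : (fun z => z - Fs (V (0, z))) = (fun z => z - iXp (GL z)).
  by apply/funext => z /=; rewrite G_rep.
rewrite A_eq in AinvK AKinv.
move/fine_cvgP: S_cvg => [S_fin e_cvg].
pose e N := fine (opnorm (S N)).
have e_ge0 N : 0 <= e N by apply/fine_ge0/opnorm_ge0/linear0.
pose delta N := 2 * b * e N * (1 + g * b * c1).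
apply: (@opnorm_via_cvg0 _ _ _ _ _ _ (fun N => c2 * delta N * m) iX_inj).
- by move=> N; rewrite !(mulr_ge0, addr_ge0).
- rewrite -(mul0r m) -(mulr0 c2) -(mul0r (1 + g * b * c1)) -(mulr0 (2 * b)).
  by apply: cvgMr_tmp; apply: cvgMl_tmp; apply: cvgMr_tmp; apply: cvgMl_tmp.
near=> N.
have S_le : forall w, `|S N w| <= e N * `|w|.
  by apply: ler_opnorm (linearZZ (S N)) _; near: N.
have bge_le : b * g * e N <= 1 / 2.
  apply: ltW; near: N; apply: (@cvgr_lt _ _ _ _ _ 0); last by rewrite divr_gt0.
  by rewrite -(mulr0 (b * g)); apply: cvgMl_tmp.
have AN_inv : bounded_invertible (fun z => z - PN N (RN N (Fs (V (0, z))))).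
  have := perturbed_bounded_invertible AinvK AKinv Ainv_le G_le S_le
    b_ge0 g_ge0 (e_ge0 N) bge_le.
  by congr bounded_invertible; apply/funext => z /=; rewrite subrKC G_rep.
apply: (discretization_error (L := fun x => PN N (RN N x)) (S := S N)
  (delta := delta N) h_ge0 fsX fsXpm T_rep
  z_ex G_rep Gm_rep Gm_le psi_ex psi_le c2_ge0 _ _ (That_rep N AN_inv)).
- by move=> w /=; rewrite subrKC.
- by move=> x; exact: PN_range.
- exact: (perturbed_fixpoint AinvK AKinv Ainv_le G_le S_le b_ge0 g_ge0 bge_le).
- move=> p zs w; exact: (perturbed_fixpoint_error AinvK Ainv_le G_le S_le
    b_ge0 g_ge0 (e_ge0 N) bge_le iXp_le).
- by rewrite /delta !(mulr_ge0, addr_ge0).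
Unshelve. all: by end_near.
Qed.
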